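(* Let $C_1$ be a positive squarefree integer and $q$ a prime. Let $(x, y, \alpha, p)$ be a solution in integers to \[ C_1x^2 + q^\alpha = y^p, \quad \gcd(C_1x, q, y) = 1, \quad x, y > 0, \quad \alpha > 0, \] with $y$ even and $p \ge 11$ prime. Let $\ell$ be a prime with $\ell = 2mp + 1$ for some integer $m > 0$ and $\ell \nmid 2qC_1y$. Let $\beta$ be the unique integer in $\{0, 1, \dots, 2p-1\}$ with $\beta \equiv \alpha \pmod{2p}$. Then there exists $\omega \in \{0, 1, \dots, \ell-1\}$ with \[ (C_1\omega^2 + q^\beta)^{2m} \equiv 1 \pmod \ell \] such that the reduction of $F_{x,\alpha}$ over $\mathbb{F}_\ell$ is either isomorphic to the curve \[ F_{\omega,\beta}/\mathbb{F}_\ell: Y^2 + XY = X^3 + \frac{C_1\omega - 1}{4}X^2 + \frac{C_1^2\omega^2 + C_1q^\beta}{64}X \] or to its quadratic twist by $q \bmod \ell$.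
   Context: $F_{x,\alpha}$ is the elliptic curve over $\mathbb{Q}$ given by $Y^2 + XY = X^3 + \frac{C_1x-1}{4}X^2 + \frac{C_1^2x^2 + C_1q^\alpha}{64}X$. Coefficients of $F_{\omega,\beta}$ are interpreted in $\mathbb{F}_\ell$ (division by $4$ and $64$ being inversion modulo the odd prime $\ell$). *)

From HB Require Import structures.
From mathcomp Require Import all_boot all_order all_algebra.
Set Implicit Arguments. Unset Strict Implicit. Unset Printing Implicit Defensive.
Import Order.TTheory GRing.Theory Num.Theory.
Local Open Scope ring_scope.

Definition squarefree (n : nat) : Prop :=
  forall r : nat, prime r -> ~~ (r * r %| n)%N.

(* A (long) Weierstrass equation
   Y^2 + a1 XY + a3 Y = X^3 + a2 X^2 + a4 X + a6 over a field K. *)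
Record wcurve (K : Type) := WCurve { wa1 : K; wa2 : K; wa3 : K; wa4 : K; wa6 : K }.

(* Isomorphism over K: an admissible change of variables
   X = u^2 X' + r, Y = u^3 Y' + s u^2 X' + t, with u <> 0, carrying E to E'
   (Silverman, Table 3.1). *)
Definition wc_iso (K : fieldType) (E E' : wcurve K) : Prop :=
  exists u r s t : K, u != 0 /\
    u * wa1 E' = wa1 E + 2 * s /\
    u ^+ 2 * wa2 E' = wa2 E - s * wa1 E + 3 * r - s ^+ 2 /\
    u ^+ 3 * wa3 E' = wa3 E + r * wa1 E + 2 * t /\
    u ^+ 4 * wa4 E' = wa4 E - s * wa3 E + 2 * r * wa2 E - (t + r * s) * wa1 E
                      + 3 * r ^+ 2 - 2 * s * t /\
    u ^+ 6 * wa6 E' = wa6 E + r * wa4 E + r ^+ 2 * wa2 E + r ^+ 3 - t * wa3 E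
                      - t ^+ 2 - r * t * wa1 E.

(* Quadratic twist by d (for char K <> 2): E is isomorphic to
   Y^2 = X^3 + (b2/4) X^2 + (b4/2) X + b6/4 and its twist by d is
   Y^2 = X^3 + d (b2/4) X^2 + d^2 (b4/2) X + d^3 (b6/4). *)
Definition wc_twist (K : fieldType) (d : K) (E : wcurve K) : wcurve K :=
  let b2 := wa1 E ^+ 2 + 4 * wa2 E in
  let b4 := 2 * wa4 E + wa1 E * wa3 E in
  let b6 := wa3 E ^+ 2 + 4 * wa6 E in
  WCurve 0 (d * (b2 / 4)) 0 (d ^+ 2 * (b4 / 2)) (d ^+ 3 * (b6 / 4)).

(* The curve F : Y^2 + XY = X^3 + (C1 x - 1)/4 X^2 + (C1^2 x^2 + C1 Q)/64 X
   over a field K, where Q stands for q^alpha (resp. q^beta). *)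
Definition Fcurve (K : fieldType) (C1 : nat) (x Q : K) : wcurve K :=
  WCurve 1 ((C1%:R * x - 1) / 4) 0
           ((C1%:R ^+ 2 * x ^+ 2 + C1%:R * Q) / 64) 0.

From HB Require Import structures.
From mathcomp Require Import all_boot all_order all_algebra finfield.
From mathcomp Require Import ring zify.
Set Implicit Arguments. Unset Strict Implicit. Unset Printing Implicit Defensive.
Import Order.TTheory GRing.Theory Num.Theory.
Local Open Scope ring_scope.

(* Write alpha = 2pk + beta and t = q^(pk), so that q^alpha = q^beta t^2, and
   take omega = x / t in F_l.  Then C1 omega^2 + q^beta = y^p / t^2, whose
   2m-th power is 1 by Fermat since 2mp = l - 1 divides both 2mp and 4mpk.
   The substitution (x, Q) = (omega t, q^beta t^2) is an isomorphism of
   F-curves when t = u^2 is a square, and lands on the twist by q when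
   t = q u^2. *)

Section FcurveIsomorphisms.

Variables (K : fieldType) (C1 : nat).
Hypothesis two_neq0 : (2 : K) != 0.

Let four_neq0 : (4 : K) != 0.
Proof. by rewrite (natrM K 2 2) mulf_neq0. Qed.

Let sixtyfour_neq0 : (64 : K) != 0.
Proof. by rewrite (natrM K 16 4) (natrM K 4 4) !mulf_neq0. Qed.

Lemma Fcurve_iso_scale (x Q u : K) : u != 0 ->
  wc_iso (Fcurve C1 (x * u ^+ 2) (Q * u ^+ 4)) (Fcurve C1 x Q).
Proof.
move=> u_neq0; exists u, 0, ((u - 1) / 2), 0; rewrite /Fcurve /=.
by do ![split | field; rewrite ?two_neq0 ?four_neq0 ?sixtyfour_neq0 ?u_neq0].
Qed.

Lemma Fcurve_iso_twist (x Q d u : K) : d != 0 -> u != 0 ->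
  wc_iso (Fcurve C1 (x * d * u ^+ 2) (Q * d ^+ 2 * u ^+ 4))
         (wc_twist d (Fcurve C1 x Q)).
Proof.
move=> d_neq0 u_neq0; exists u, 0, (- 1 / 2), 0; rewrite /wc_twist /Fcurve /=.
by do ![split | field; rewrite ?two_neq0 ?four_neq0 ?sixtyfour_neq0 ?u_neq0 ?d_neq0].
Qed.

Lemma Fcurve_iso_or_twist (x Q d : K) (n : nat) : d != 0 ->
  let E := Fcurve C1 (x * d ^+ n) (Q * (d ^+ n) ^+ 2) in
  wc_iso E (Fcurve C1 x Q) \/ wc_iso E (wc_twist d (Fcurve C1 x Q)).
Proof.
move=> d_neq0 E; have u_neq0 : d ^+ n./2 != 0 by rewrite expf_neq0.
rewrite /E -(odd_double_half n) -muln2 exprD exprM.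
case: (odd n); rewrite ?expr1 ?expr0 ?mul1r.
- right; have := Fcurve_iso_twist x Q d_neq0 u_neq0.
  by congr (wc_iso (Fcurve _ _ _) _); ring.
- by left; rewrite -[(_ ^+ 2) ^+ 2]exprM; apply: Fcurve_iso_scale.
Qed.

End FcurveIsomorphisms.

Lemma expr_mod_double (R : pzSemiRingType) (a : R) (n r : nat) :
  a ^+ n = a ^+ (n %% (2 * r)) * (a ^+ (r * (n %/ (2 * r)))) ^+ 2.
Proof.
rewrite -exprM -exprD {1}(divn_eq n (2 * r)) addnC; congr (_ ^+ (_ + _)); lia.
Qed.

Section PrimeField.

Variable l : nat.
Hypothesis l_prime : prime l.

Lemma Fp_expf_pred (a : 'F_l) : a != 0 -> a ^+ l.-1 = 1.
Proof.
move=> a_neq0; apply: (mulfI a_neq0); rewrite mulr1 -exprS prednK ?prime_gt0 //.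
by have := expf_card a; rewrite card_Fp.
Qed.

Lemma Fp_expf_pred_dvd (a : 'F_l) (n : nat) :
  a != 0 -> (l.-1 %| n)%N -> a ^+ n = 1.
Proof. by move=> a_neq0 /dvdnP[k ->]; rewrite mulnC exprM Fp_expf_pred // expr1n. Qed.

Lemma Fp_nat_eq_mod (a b : nat) : (a%:R = b%:R :> 'F_l) -> (a = b %[mod l])%N.
Proof. by move/(congr1 (@nat_of_ord _)); rewrite !val_Fp_nat. Qed.

Lemma Fp_ord_lt (a : 'F_l) : (a < l)%N.
Proof. by rewrite -[l in (_ < l)%N](Fp_cast l_prime). Qed.

End PrimeField.

Theorem lemma7p1 (C1 q x y alpha p l m : nat) :
  (0 < C1)%N -> squarefree C1 -> prime q ->
  (C1 * x ^ 2 + q ^ alpha = y ^ p)%N ->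
  gcdn (gcdn (C1 * x) q) y = 1%N ->
  (0 < x)%N -> (0 < y)%N -> (0 < alpha)%N ->
  ~~ odd y -> prime p -> (11 <= p)%N ->
  prime l -> (0 < m)%N -> l = (2 * m * p + 1)%N ->
  ~~ (l %| 2 * q * C1 * y)%N ->
  let beta := (alpha %% (2 * p))%N in
  exists omega : nat, (omega < l)%N /\
    ((C1 * omega ^ 2 + q ^ beta) ^ (2 * m) = 1 %[mod l])%N /\
    (wc_iso (Fcurve C1 (x%:R : 'F_l) (q ^ alpha)%:R)
            (Fcurve C1 (omega%:R : 'F_l) (q ^ beta)%:R)
     \/
     wc_iso (Fcurve C1 (x%:R : 'F_l) (q ^ alpha)%:R)
            (wc_twist (q%:R : 'F_l) (Fcurve C1 (omega%:R : 'F_l) (q ^ beta)%:R))).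
Proof.
move=> _ _ _ xy_eq _ _ _ _ _ _ _ l_prime _ lE l_ndvd beta.
have Fp_neq0 n : (n %| 2 * q * C1 * y)%N -> (n%:R : 'F_l) != 0.
  move=> n_dvd; rewrite -(dvdn_pcharf (pchar_Fp l_prime)).
  by apply: contra l_ndvd => /dvdn_trans; apply.
have two_neq0 : (2 : 'F_l) != 0 by apply/Fp_neq0/dvdn_mulr/dvdn_mulr/dvdn_mulr.
have q_neq0 : (q%:R : 'F_l) != 0 by apply/Fp_neq0/dvdn_mulr/dvdn_mulr/dvdn_mull.
have y_neq0 : (y%:R : 'F_l) != 0 by apply/Fp_neq0/dvdn_mull.
pose k := (alpha %/ (2 * p))%N; pose t : 'F_l := q%:R ^+ (p * k).
have qalphaE : ((q ^ alpha)%:R : 'F_l) = (q ^ beta)%:R * t ^+ 2.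
  by rewrite !natrX [LHS](expr_mod_double _ _ p).
pose omega : nat := x%:R / t.
have omegaE : (omega%:R : 'F_l) * t = x%:R by rewrite natr_Zp divfK ?expf_neq0.
exists omega; split; first exact: Fp_ord_lt.
split; last by rewrite -omegaE qalphaE; apply: Fcurve_iso_or_twist.
have normE : ((C1 * omega ^ 2 + q ^ beta)%:R : 'F_l) = y%:R ^+ p / t ^+ 2.
  rewrite -natrX -xy_eq !natrD !natrM qalphaE !natrX -omegaE.
  by field; rewrite expf_neq0 ?expf_neq0.
apply: (Fp_nat_eq_mod l_prime); rewrite natrX normE expr_div_n /t -!exprM.
have lpredE : l.-1 = (2 * m * p)%N by rewrite lE addn1.
rewrite !Fp_expf_pred_dvd ?divr1 // lpredE; apply/dvdnP.
- by exists (2 * k)%N; lia.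
- by exists 1%N; lia.
Qed.
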